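(* Let $X$ be a random variable with values in a set $\mathcal{X}$, let $\theta=\theta(X)\in\mathbb{R}$ be a statistic of $X$, and let $L=(X_1,\dots,X_n)$ be an i.i.d. sample of $X$. Fix a batch size $m\ge 1$ and let $\hat\theta$ be an estimator of $\theta$ defined on samples of size $m$. Let $\mathcal{U}$ be the finite set (of cardinality $n^m$) of all functions $u:\{1,\dots,m\}\to\{1,\dots,n\}$, and for $u\in\mathcal U$ write $L_u=(X_{u(1)},\dots,X_{u(m)})$. Assume $\mathbb{E}_L\big(\hat\theta(L_u)^2\big)<\infty$ for every $u\in\mathcal U$. For $N\ge 1$ let $B=(U^1,\dots,U^N)$ be i.i.d. uniform on $\mathcal U$, independent of $L$, and define the bagged estimator $$\tilde\theta(L,B)=\frac1N\sum_{i=1}^N\hat\theta(L_{U^i}).$$ Let $U$ denote a random variable uniform on $\mathcal U$ independent of $L$, and let $\mathbb{E}_U,\mathrm{Var}_U$ denote expectation and variance with respect to $U$ only (with $L$ fixed). Then $$\mathrm{MSE}(\tilde\theta):=\mathbb{E}_{(L,B)}\big((\tilde\theta(L,B)-\theta)^2\big)=\frac1N F+G,$$ where $$F=\mathbb{E}_L\big(\mathrm{Var}_U(\hat\theta(L_U))\big)\ge 0,\qquad G=\mathrm{Var}_L\big(\mathbb{E}_U(\hat\theta(L_U))\big)+\big(\mathbb{E}_L(\mathbb{E}_U(\hat\theta(L_U)))-\theta\big)^2\ge 0$$ do not depend on $N$. More precisely: (1) $\mathbb{E}_{(L,B)}(\tilde\theta(L,B))=\mathbb{E}_L\big(\mathbb{E}_U(\hat\theta(L_U))\big)$;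 (2) $\mathrm{Var}_{(L,B)}(\tilde\theta(L,B))=\frac1N\mathbb{E}_L\big(\mathrm{Var}_U(\hat\theta(L_U))\big)+\mathrm{Var}_L\big(\mathbb{E}_U(\hat\theta(L_U))\big)$.
   Context: $\mathbb{E}_L,\mathrm{Var}_L$ denote expectation/variance with respect to the sample $L$, and $\mathbb{E}_{(L,B)},\mathrm{Var}_{(L,B)}$ with respect to the pair $(L,B)$. The sampling $L_U$ is uniform sampling with replacement of $m$ points from $L$. *)

From HB Require Import structures.
From mathcomp Require Import all_boot all_order all_algebra.
From mathcomp Require Import all_classical all_reals all_analysis.
Set Implicit Arguments. Unset Strict Implicit. Unset Printing Implicit Defensive.
Import Order.TTheory GRing.Theory Num.Theory.
Local Open Scope classical_set_scope.
Local Open Scope ring_scope.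

Definition unif_avg (R : realType) (I : finType) (f : I -> R) : R :=
  (#|I|%:R)^-1 * \sum_(i : I) f i.

Definition unif_var (R : realType) (I : finType) (f : I -> R) : R :=
  unif_avg (fun i => (f i - unif_avg f) ^+ 2).

Notation Idx m n := {ffun 'I_m -> 'I_n}.

Definition resample (Om T : Type) (n m : nat) (X : 'I_n -> Om -> T)
  (u : Idx m n) (w : Om) : 'I_m -> T := fun j => X (u j) w.

Definition bagged (R : realType) (Om T : Type) (n m N : nat)
  (thetahat : ('I_m -> T) -> R) (X : 'I_n -> Om -> T)
  (b : {ffun 'I_N -> Idx m n}) (w : Om) : R :=
  (N%:R)^-1 * \sum_(i < N) thetahat (resample X (b i) w).

(* Expectation with respect to the pair (L, B), where B is uniform on U^N
   (i.e. U^1..U^N i.i.d. uniform on U) and independent of L. *)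
Definition E_LB (dO : measure_display) (Om : measurableType dO) (R : realType)
  (P : probability Om R) (n m N : nat)
  (g : Om -> {ffun 'I_N -> Idx m n} -> R) : \bar R :=
  'E_P[fun w => unif_avg (g w)]%E.

Definition Var_LB (dO : measure_display) (Om : measurableType dO) (R : realType)
  (P : probability Om R) (n m N : nat)
  (g : Om -> {ffun 'I_N -> Idx m n} -> R) : \bar R :=
  E_LB P (fun w b => (g w b - fine (E_LB P g)) ^+ 2).

Definition iid (dO dT : measure_display) (Om : measurableType dO)
  (T : measurableType dT) (R : realType) (P : probability Om R) (n : nat)
  (X : 'I_n -> Om -> T) : Prop :=
  [/\ (forall i, measurable_fun setT (X i)),
      (forall i j (A : set T), measurable A ->
          P (X i @^-1` A) = P (X j @^-1` A)) &
      (forall A : 'I_n -> set T, (forall i, measurable (A i)) ->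
          P (\bigcap_(i in [set: 'I_n]) (X i @^-1` A i)) =
          (\prod_(i < n) P (X i @^-1` A i))%E)].

From HB Require Import structures.
From mathcomp Require Import all_boot all_order all_algebra.
From mathcomp Require Import all_classical all_reals all_analysis.
From mathcomp Require Import ring.
Set Implicit Arguments. Unset Strict Implicit. Unset Printing Implicit Defensive.
Import Order.TTheory GRing.Theory Num.Theory.
Local Open Scope ring_scope.

(* Conditionally on the sample, the bags U^1, ..., U^N are the coordinates of a
   uniformly random b : {ffun 'I_N -> U}, hence i.i.d. uniform on U, so the
   bagged estimator is a mean of N i.i.d. copies of thetahat (L_U). Its
   conditional mean is E_U thetahat (L_U), and its conditional mean squared
   deviation from theta is Var_U / N + (E_U - theta)^2. Taking E_L and splitting
   E_L (E_U - theta)^2 = Var_L E_U + (E_L E_U - theta)^2 gives all the formulas;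
   square-integrability of each thetahat (L_u) keeps every expectation finite. *)

Section uniform_average.
Variable R : realType.

Lemma unif_avgD (I : finType) (f g : I -> R) :
  unif_avg (fun i => f i + g i) = unif_avg f + unif_avg g.
Proof. by rewrite /unif_avg big_split mulrDr. Qed.

Lemma unif_avgZ (I : finType) (a : R) (f : I -> R) :
  unif_avg (fun i => a * f i) = a * unif_avg f.
Proof. by rewrite /unif_avg -mulr_sumr mulrCA. Qed.

Lemma unif_avg_cst (I : finType) (c : R) :
  (0 < #|I|)%N -> unif_avg (fun _ : I => c) = c.
Proof.
move=> I0; rewrite /unif_avg sumr_const -[c *+ _]mulr_natl mulKf //.
by rewrite pnatr_eq0 -lt0n.
Qed.

Lemma unif_avg_sum (I J : finType) (F : J -> I -> R) :
  unif_avg (fun i => \sum_j F j i) = \sum_j unif_avg (F j).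
Proof. by rewrite /unif_avg exchange_big mulr_sumr. Qed.

Lemma unif_avg_ge0 (I : finType) (f : I -> R) :
  (forall i, 0 <= f i) -> 0 <= unif_avg f.
Proof. by move=> f0; rewrite mulr_ge0 ?invr_ge0 ?sumr_ge0. Qed.

Lemma unif_var_ge0 (I : finType) (f : I -> R) : 0 <= unif_var f.
Proof. by apply: unif_avg_ge0 => i; exact: sqr_ge0. Qed.

Lemma unif_avg_prod_ffun (I T : finType) (F : I -> T -> R) :
  unif_avg (fun b : {ffun I -> T} => \prod_k F k (b k)) = \prod_k unif_avg (F k).
Proof.
by rewrite /unif_avg prodrMl bigA_distr_bigA card_ffun natrX exprVn.
Qed.

Section ffun_coordinates.
Variables (I T : finType).
Hypothesis T0 : (0 < #|T|)%N.

Lemma unif_avg_ffun_coord (h : T -> R) (i : I) :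
  unif_avg (fun b : {ffun I -> T} => h (b i)) = unif_avg h.
Proof.
pose F k := if k == i then h else fun=> 1.
transitivity (unif_avg (fun b : {ffun I -> T} => \prod_k F k (b k))).
  congr unif_avg; apply/funext => b.
  by rewrite (bigD1 i) //= /F eqxx big1 ?mulr1 // => k /negPf ->.
rewrite unif_avg_prod_ffun (bigD1 i) //= /F eqxx big1 ?mulr1 // => k /negPf ->.
exact: unif_avg_cst.
Qed.

Lemma unif_avg_ffun_coordM (g h : T -> R) (i j : I) : i != j ->
  unif_avg (fun b : {ffun I -> T} => g (b i) * h (b j)) = unif_avg g * unif_avg h.
Proof.
move=> ij; have ji : (j == i) = false by rewrite eq_sym (negPf ij).
pose F k := if k == i then g else if k == j then h else fun=> 1.
transitivity (unif_avg (fun b : {ffun I -> T} => \prod_k F k (b k))).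
  congr unif_avg; apply/funext => b.
  rewrite (bigD1 i) // (bigD1 j) 1?eq_sym //= /F eqxx ji eqxx mulrA.
  by rewrite big1 ?mulr1 // => k /andP[/negPf -> /negPf ->].
rewrite unif_avg_prod_ffun (bigD1 i) // (bigD1 j) 1?eq_sym //= /F eqxx ji eqxx.
rewrite mulrA big1 ?mulr1 // => k /andP[/negPf -> /negPf ->].
exact: unif_avg_cst.
Qed.

Lemma unif_avg_ffun_sum_sqr (g : T -> R) : unif_avg g = 0 ->
  unif_avg (fun b : {ffun I -> T} => (\sum_i g (b i)) ^+ 2)
  = #|I|%:R * unif_avg (fun t => g t ^+ 2).
Proof.
move=> g0.
have -> : (fun b : {ffun I -> T} => (\sum_i g (b i)) ^+ 2)
        = (fun b => \sum_i \sum_j g (b i) * g (b j)).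
  apply/funext => b; rewrite expr2 mulr_suml.
  by under eq_bigr do rewrite mulr_sumr.
rewrite unif_avg_sum -sum1_card natr_sum mulr_suml; apply: eq_bigr => i _.
rewrite unif_avg_sum (bigD1 i) //= big1 ?addr0 => [|j ji].
  under eq_fun do rewrite -expr2.
  by rewrite (unif_avg_ffun_coord (fun t => g t ^+ 2)) mul1r.
by rewrite unif_avg_ffun_coordM 1?eq_sym // g0 mul0r.
Qed.

End ffun_coordinates.

Lemma unif_avg_bag (N : nat) (T : finType) (f : T -> R) :
  (0 < N)%N -> (0 < #|T|)%N ->
  unif_avg (fun b : {ffun 'I_N -> T} => N%:R^-1 * \sum_(i < N) f (b i))
  = unif_avg f.
Proof.
move=> N0 T0; rewrite unif_avgZ unif_avg_sum.
under eq_bigr do rewrite unif_avg_ffun_coord //.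
rewrite sumr_const card_ord -[unif_avg f *+ N]mulr_natl mulKf //.
by rewrite pnatr_eq0 -lt0n.
Qed.

Lemma unif_avg_bag_sqrB (N : nat) (T : finType) (f : T -> R) (c : R) :
  (0 < N)%N -> (0 < #|T|)%N ->
  unif_avg (fun b : {ffun 'I_N -> T} => (N%:R^-1 * \sum_(i < N) f (b i) - c) ^+ 2)
  = N%:R^-1 * unif_var f + (unif_avg f - c) ^+ 2.
Proof.
move=> N0 T0; have N0' : (N%:R : R) != 0 by rewrite pnatr_eq0 -lt0n.
set E := unif_avg f; pose g t := f t - E.
have g0 : unif_avg g = 0.
  by rewrite (unif_avgD f (fun=> - E)) unif_avg_cst // subrr.
pose s (b : {ffun 'I_N -> T}) := \sum_(i < N) g (b i).
have -> : (fun b : {ffun 'I_N -> T} => (N%:R^-1 * \sum_(i < N) f (b i) - c) ^+ 2)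
        = (fun b => N%:R^-1 ^+ 2 * s b ^+ 2
                    + (2 * N%:R^-1 * (E - c) * s b + (E - c) ^+ 2)).
  apply/funext => b; rewrite /s /g sumrB sumr_const card_ord -[E *+ N]mulr_natl.
  by field.
have card0 : (0 < #|{ffun 'I_N -> T}|)%N by rewrite card_ffun expn_gt0 T0.
rewrite !unif_avgD !unif_avgZ unif_avg_cst //.
have -> : unif_avg s = 0.
  by rewrite unif_avg_sum big1 // => i _; rewrite unif_avg_ffun_coord.
rewrite unif_avg_ffun_sum_sqr // card_ord /unif_var -/E.
by field.
Qed.

End uniform_average.

Section bias_variance.
Local Open Scope ereal_scope.
Context d (Om : measurableType d) (R : realType) (P : probability Om R).

Lemma Lfun2_expectation_sqr (f : Om -> R) :
  measurable_fun setT f -> 'E_P[fun w => (f w ^+ 2)%R] < +oo ->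
  f \in Lfun P 2%:E.
Proof.
move=> mf f2; rewrite inE; apply/andP; split; first by rewrite inE.
rewrite inE /= /finite_norm unlock /Lnorm poweR_lty //.
move: f2; rewrite unlock; apply: le_lt_trans; rewrite le_eqVlt; apply/orP; left.
apply/eqP; apply: eq_integral => x _ /=.
by rewrite powR_mulrn ?normr_ge0 // real_normK ?num_real.
Qed.

Lemma expectation_sqrB (Y : Om -> R) (c : R) : Y \in Lfun P 2%:E ->
  'E_P[fun w => ((Y w - c) ^+ 2)%R]
  = 'V_P[Y] + ('E_P[Y] - c%:E) * ('E_P[Y] - c%:E).
Proof.
move=> Y2.
have Y1 := Lfun_subset12 (fin_num_measure P _ measurableT) Y2.
have Yc2 : (Y \- cst c)%R \in Lfun P 2%:E.
  by rewrite rpredB ?lee1n // => *; exact: Lfun_cst.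
rewrite -(varianceB_cst_r c Y2) varianceE //.
rewrite expectationB ?Lfun_cst // expectation_cst.
have Ec : 'E_P[Y] - c%:E \is a fin_num by rewrite fin_numB expectation_fin_num.
by rewrite expe2 subeK ?fin_numM.
Qed.

Lemma unif_avg_Lfun (U : finType) (f : U -> Om -> R) (r : R) :
  (1 <= r)%R -> (forall u, f u \in Lfun P r%:E) ->
  (fun w => unif_avg (fun u => f u w)) \in Lfun P r%:E.
Proof.
move=> r1 fr.
have -> : (fun w => unif_avg (fun u => f u w)) = (#|U|%:R^-1 \o* \sum_u f u)%R.
  by apply/funext => w; rewrite /= fct_sumE mulrC.
by apply: Lfun_scale => //; apply: rpred_sum => u _; exact: fr.
Qed.

Section pointwise_uniform_average.
Variables (U : finType) (f : U -> Om -> R).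
Hypothesis f2 : forall u, f u \in Lfun P 2%:E.

Let EU w := unif_avg (fun u => f u w).
Let VU w := unif_var (fun u => f u w).

Lemma unif_avg_Lfun2 : EU \in Lfun P 2%:E.
Proof. by apply: unif_avg_Lfun => //; rewrite ler1n. Qed.

Lemma unif_var_Lfun1 : VU \in Lfun P 1.
Proof.
apply: (unif_avg_Lfun (f := fun u w => ((f u w - EU w) ^+ 2)%R)) => // u.
have EU2 := unif_avg_Lfun2.
have fEU2 : (f u \- EU)%R \in Lfun P 2%:E by rewrite rpredB ?lee1n.
exact: (Lfun2_mul_Lfun1 fEU2 fEU2).
Qed.

Lemma expectation_unif_var_sqrB (a c : R) :
  'E_P[fun w => (a * VU w + (EU w - c) ^+ 2)%R]
  = a%:E * 'E_P[VU] + ('V_P[EU] + ('E_P[EU] - c%:E) * ('E_P[EU] - c%:E)).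
Proof.
have EU2 := unif_avg_Lfun2.
have EUc1 : (fun w => (EU w - c) ^+ 2)%R \in Lfun P 1.
  have EUc2 : (EU \- cst c)%R \in Lfun P 2%:E.
    by rewrite rpredB ?lee1n // => *; exact: Lfun_cst.
  exact: (Lfun2_mul_Lfun1 EUc2 EUc2).
have -> : (fun w => a * VU w + (EU w - c) ^+ 2)%R
        = (a \o* VU \+ fun w => (EU w - c) ^+ 2)%R.
  by apply/funext => w /=; rewrite mulrC.
rewrite expectationD ?Lfun_scale ?unif_var_Lfun1 //.
by rewrite expectationZl ?unif_var_Lfun1 // expectation_sqrB.
Qed.

End pointwise_uniform_average.

End bias_variance.

Theorem theorem1 (dO dT : measure_display) (Om : measurableType dO)
  (T : measurableType dT) (R : realType) (P : probability Om R)
  (n m N : nat) (X : 'I_n -> Om -> T) (thetahat : ('I_m -> T) -> R)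
  (theta : R) :
  (0 < n)%N -> (0 < m)%N -> (0 < N)%N ->
  iid P X ->
  (forall u : Idx m n,
      measurable_fun setT (fun w => thetahat (resample X u w))) ->
  (forall u : Idx m n,
      ('E_P[fun w => (thetahat (resample X u w) ^+ 2)%R] < +oo)%E) ->
  let EU := fun w => unif_avg (fun u : Idx m n => thetahat (resample X u w)) in
  let VU := fun w => unif_var (fun u : Idx m n => thetahat (resample X u w)) in
  let F := 'E_P[VU]%E in
  let G := ('V_P[EU] + ('E_P[EU] - theta%:E) * ('E_P[EU] - theta%:E))%E in
  [/\ E_LB P (fun w (b : {ffun 'I_N -> Idx m n}) =>
          (bagged thetahat X b w - theta) ^+ 2)
        = ((N%:R)^-1%:E * F + G)%E,
      (0 <= F)%E, (0 <= G)%E,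
      E_LB P (fun w (b : {ffun 'I_N -> Idx m n}) => bagged thetahat X b w)
        = 'E_P[EU]%E &
      Var_LB P (fun w (b : {ffun 'I_N -> Idx m n}) => bagged thetahat X b w)
        = ((N%:R)^-1%:E * F + 'V_P[EU])%E].
Proof.
(* Neither m > 0 nor the i.i.d. assumption is needed: the identities hold for
   any joint law of the sample. *)
move=> n0 _ N0 _ meas_thetahat sqr_thetahat EU VU F G.
pose fu (u : Idx m n) w := thetahat (resample X u w).
have fu2 u : fu u \in Lfun P 2%:E.
  exact: (Lfun2_expectation_sqr (meas_thetahat u) (sqr_thetahat u)).
have U0 : (0 < #|Idx m n|)%N by rewrite card_ffun !card_ord expn_gt0 n0.
have EU_fin : 'E_P[EU]%E \is a fin_num.
  apply/expectation_fin_num/(Lfun_subset12 (fin_num_measure P _ measurableT)).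
  exact: unif_avg_Lfun2.
have mean_bag : E_LB P (fun w (b : {ffun 'I_N -> Idx m n}) =>
    bagged thetahat X b w) = 'E_P[EU]%E.
  by congr expectation; apply/funext => w; exact: unif_avg_bag.
have sqr_bagB c : E_LB P (fun w (b : {ffun 'I_N -> Idx m n}) =>
    (bagged thetahat X b w - c) ^+ 2)
  = ((N%:R)^-1%:E * F + ('V_P[EU] + ('E_P[EU] - c%:E) * ('E_P[EU] - c%:E)))%E.
  rewrite -(expectation_unif_var_sqrB fu2); congr expectation; apply/funext => w.
  exact: unif_avg_bag_sqrB.
split => //.
- by apply: expectation_ge0 => w; exact: unif_var_ge0.
- by rewrite adde_ge0 ?variance_ge0 // -expe2 sqre_ge0.
- by rewrite /Var_LB mean_bag sqr_bagB fineK // subee // mul0e adde0.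
Qed.
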